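(* Let $\mathcal S$ be a trajectory set and fix $n_0\in\mathbb N$. Suppose that for every $S\in\mathcal S$ and every $j\le n_0-1$ the node $\mathcal S_{(S,j)}$ is not an arbitrage node of type II. If $(V,n,H)$ is a positive simple portfolio with maturity $n\le n_0$, then $\Pi^{V,n,H}_j(S)\ge0$ for every $j\in\mathbb N_0$ and every $S\in\mathcal S$.
   Context: Fix $s_0\in\mathbb R$. A trajectory set is any set $\mathcal S$ of real sequences $S=(S_j)_{j\in\mathbb N_0}$ with $S_0=s_0$. A simple portfolio $(V,n,H)$ (with maturity $n$) consists of $V\in\mathbb R$, $n\in\mathbb N$ and nonanticipating functions $H_i:\mathcal S\to\mathbb R$, $0\le i\le n-1$ (i.e. $H_i(S)=h_i(S_0,\dots,S_i)$ for arbitrary $h_i:\mathbb R^{i+1}\to\mathbb R$). Its wealth is $\Pi^{V,n,H}_j(S)=V+\sum_{i=0}^{\min\{j,n\}-1}H_i(S)(S_{i+1}-S_i)$, $\Pi^{V,n,H}_\infty:=\Pi^{V,n,H}_n$; it is positive if $V\ge0$ and $\Pi^{V,n,H}_\infty(S)\ge0$ for all $S\in\mathcal S$. For $S\in\mathcal S$, $j\in\mathbb N_0$, the node is $\mathcal S_{(S,j)}=\{\tilde S\in\mathcal S:(\tilde S_0,\dots,\tilde S_j)=(S_0,\dots,S_j)\}$. It is an arbitrage node if for some $\varepsilon\in\{-1,1\}$, $\varepsilon(\tilde S_{j+1}-S_j)\ge0$ for all $\tilde S\in\mathcal S_{(S,j)}$ with strict inequality for at least one; of type I if some $S'\in\mathcal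 S_{(S,j)}$ has $S'_{j+1}=S_j$, and of type II otherwise. *)

From Stdlib Require Import Reals Lra Lia List.
Open Scope R_scope.

Definition seqR := nat -> R.

Definition trajectory_set (s0 : R) (Sset : seqR -> Prop) : Prop :=
  forall S, Sset S -> S 0%nat = s0.

Definition prefix (S : seqR) (i : nat) : list R := map S (seq 0 (Datatypes.S i)).

Definition nonanticipating (Sset : seqR -> Prop) (n : nat)
  (H : nat -> seqR -> R) : Prop :=
  forall i, (i <= n - 1)%nat ->
    exists h : list R -> R, forall S, Sset S -> H i S = h (prefix S i).

Fixpoint gains (H : nat -> seqR -> R) (S : seqR) (m : nat) : R :=
  match m with
  | O => 0
  | Datatypes.S k => gains H S k + H k S * (S (Datatypes.S k) - S k)
  end.

Definition wealth (V : R) (n : nat) (H : nat -> seqR -> R) (j : nat) (S : seqR) : R :=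
  V + gains H S (Nat.min j n).

Definition wealth_inf (V : R) (n : nat) (H : nat -> seqR -> R) (S : seqR) : R :=
  wealth V n H n S.

Definition simple_portfolio (Sset : seqR -> Prop) (V : R) (n : nat)
  (H : nat -> seqR -> R) : Prop :=
  (1 <= n)%nat /\ nonanticipating Sset n H.

Definition positive_portfolio (Sset : seqR -> Prop) (V : R) (n : nat)
  (H : nat -> seqR -> R) : Prop :=
  simple_portfolio Sset V n H /\ 0 <= V /\
  forall S, Sset S -> 0 <= wealth_inf V n H S.

Definition node (Sset : seqR -> Prop) (S : seqR) (j : nat) (T : seqR) : Prop :=
  Sset T /\ forall k, (k <= j)%nat -> T k = S k.

Definition arbitrage_node (Sset : seqR -> Prop) (S : seqR) (j : nat) : Prop :=
  exists eps : R, (eps = -1 \/ eps = 1) /\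
    (forall T, node Sset S j T -> 0 <= eps * (T (Datatypes.S j) - S j)) /\
    (exists T, node Sset S j T /\ 0 < eps * (T (Datatypes.S j) - S j)).

Definition type_I_node (Sset : seqR -> Prop) (S : seqR) (j : nat) : Prop :=
  exists T, node Sset S j T /\ T (Datatypes.S j) = S j.

Definition arbitrage_node_typeII (Sset : seqR -> Prop) (S : seqR) (j : nat) : Prop :=
  arbitrage_node Sset S j /\ ~ type_I_node Sset S j.

(* Backward induction over the dates before maturity.  If the wealth at date j
   on the path X were negative, nonnegativity of the wealth at date j+1 on every
   path of the node S_(X,j) would force H_j(X) (S_{j+1} - X_j) > 0 on the whole
   node, since the wealth at date j and the position H_j are the same along
   the node.  Then every successor moves strictly in the direction of the sign
   of H_j(X): the node is an arbitrage node, and of type II because no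
   successor stays flat. *)

From Stdlib Require Import Reals Lra Lia List.
Open Scope R_scope.

Lemma prefix_node (Sset : seqR -> Prop) (X Y : seqR) (j i : nat) :
  node Sset X j Y -> (i <= j)%nat -> prefix Y i = prefix X i.
Proof.
  intros [_ HY] Hij. unfold prefix. apply map_ext_in. intros k Hk.
  apply in_seq in Hk. apply HY. lia.
Qed.

Lemma arbitrage_node_typeII_of_strict_gain (Sset : seqR -> Prop) (X : seqR)
    (j : nat) (h : R) :
  Sset X ->
  (forall Y, node Sset X j Y -> 0 < h * (Y (S j) - X j)) ->
  arbitrage_node_typeII Sset X j.
Proof.
  intros HX Hgain.
  assert (HXX : node Sset X j X) by (split; auto).
  assert (Hsign : exists eps, (eps = -1 \/ eps = 1) /\
            forall Y, node Sset X j Y -> 0 < eps * (Y (S j) - X j)).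
  { destruct (Rtotal_order h 0) as [Hh | [Hh | Hh]].
    - exists (-1). split; [now left |]. intros Y HY. specialize (Hgain Y HY). nra.
    - specialize (Hgain X HXX). subst h. lra.
    - exists 1. split; [now right |]. intros Y HY. specialize (Hgain Y HY). nra. }
  destruct Hsign as [eps [Heps Hpos]]. split.
  - exists eps. split; [exact Heps | split].
    + intros Y HY. apply Rlt_le, Hpos, HY.
    + exists X. split; [exact HXX | apply Hpos, HXX].
  - intros [Y [HY Hflat]]. specialize (Hgain Y HY). rewrite Hflat in Hgain. lra.
Qed.

Lemma one_step_value_nonneg (Sset : seqR -> Prop) (X : seqR) (j : nat) (w h : R) :
  Sset X -> ~ arbitrage_node_typeII Sset X j ->
  (forall Y, node Sset X j Y -> 0 <= w + h * (Y (S j) - X j)) ->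
  0 <= w.
Proof.
  intros HX Hno Hsucc. destruct (Rle_or_lt 0 w) as [Hw | Hw]; [exact Hw |].
  exfalso. apply Hno, (arbitrage_node_typeII_of_strict_gain Sset X j h HX).
  intros Y HY. specialize (Hsucc Y HY). lra.
Qed.

Section Wealth.

Variables (Sset : seqR -> Prop) (V : R) (n : nat) (H : nat -> seqR -> R).
Hypothesis H_nonanticipating : nonanticipating Sset n H.

Lemma position_node (X Y : seqR) (j i : nat) :
  Sset X -> node Sset X j Y -> (i <= j)%nat -> (i <= n - 1)%nat ->
  H i Y = H i X.
Proof.
  intros HX HY Hij Hin. destruct (H_nonanticipating i Hin) as [h Hh].
  rewrite (Hh Y (proj1 HY)), (Hh X HX). f_equal. exact (prefix_node Sset X Y j i HY Hij).
Qed.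

Lemma gains_node (X Y : seqR) (j m : nat) :
  Sset X -> node Sset X j Y -> (j <= n)%nat -> (m <= j)%nat ->
  gains H Y m = gains H X m.
Proof.
  intros HX HY Hjn. induction m as [| m IH]; intros Hmj; simpl; [reflexivity |].
  rewrite IH, (position_node X Y j m) by (auto; lia).
  destruct HY as [_ Hagree]. rewrite (Hagree (S m)), (Hagree m) by lia.
  reflexivity.
Qed.

Lemma wealth_succ (Y : seqR) (j : nat) :
  (j < n)%nat ->
  wealth V n H (S j) Y = wealth V n H j Y + H j Y * (Y (S j) - Y j).
Proof.
  intros Hjn. unfold wealth. rewrite !Nat.min_l by lia. simpl. ring.
Qed.

Lemma wealth_succ_node (X Y : seqR) (j : nat) :
  Sset X -> node Sset X j Y -> (j < n)%nat ->
  wealth V n H (S j) Y = wealth V n H j X + H j X * (Y (S j) - X j).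
Proof.
  intros HX HY Hjn. rewrite wealth_succ by exact Hjn.
  unfold wealth. rewrite Nat.min_l by lia.
  rewrite (gains_node X Y j j), (position_node X Y j j) by (auto; lia).
  rewrite (proj2 HY j) by lia. reflexivity.
Qed.

Hypothesis no_typeII_before_maturity :
  forall X j, Sset X -> (j < n)%nat -> ~ arbitrage_node_typeII Sset X j.
Hypothesis wealth_inf_nonneg : forall X, Sset X -> 0 <= wealth_inf V n H X.

Lemma wealth_nonneg_backward (k : nat) (X : seqR) :
  Sset X -> 0 <= wealth V n H (n - k) X.
Proof.
  revert X. induction k as [| k IH]; intros X HX.
  - rewrite Nat.sub_0_r. exact (wealth_inf_nonneg X HX).
  - destruct (Nat.le_gt_cases n k) as [Hnk | Hkn].
    + replace (n - S k)%nat with (n - k)%nat by lia. exact (IH X HX).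
    + set (j := (n - S k)%nat).
      assert (Hjn : (j < n)%nat) by (unfold j; lia).
      apply (one_step_value_nonneg Sset X j _ (H j X) HX
               (no_typeII_before_maturity X j HX Hjn)).
      intros Y HY. rewrite <- (wealth_succ_node X Y j HX HY Hjn).
      replace (S j) with (n - k)%nat by (unfold j; lia).
      exact (IH Y (proj1 HY)).
Qed.

Lemma wealth_nonneg (j : nat) (X : seqR) : Sset X -> 0 <= wealth V n H j X.
Proof.
  intros HX. destruct (Nat.le_gt_cases n j) as [Hnj | Hjn].
  - pose proof (wealth_inf_nonneg X HX) as Hinf.
    unfold wealth_inf, wealth in *. rewrite Nat.min_id in Hinf.
    rewrite Nat.min_r by exact Hnj. exact Hinf.
  - replace j with (n - (n - j))%nat by lia. exact (wealth_nonneg_backward _ X HX).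
Qed.

End Wealth.

Theorem lemma5p7 (s0 : R) (Sset : seqR -> Prop) (n0 : nat) :
  trajectory_set s0 Sset ->
  (1 <= n0)%nat ->
  (forall S j, Sset S -> (j <= n0 - 1)%nat -> ~ arbitrage_node_typeII Sset S j) ->
  forall (V : R) (n : nat) (H : nat -> seqR -> R),
    positive_portfolio Sset V n H ->
    (n <= n0)%nat ->
    forall (j : nat) (S : seqR), Sset S -> 0 <= wealth V n H j S.
Proof.
  intros _ _ Hno_typeII V n H [[_ Hna] [_ Hterminal]] Hn0.
  apply wealth_nonneg; [exact Hna | | exact Hterminal].
  intros X j HX Hjn. apply Hno_typeII; [exact HX | lia].
Qed.
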